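(* Let $(Q,\cdot,e)$ be a double Ward quasigroup of finite order $n$ which is $k$-translatable (with respect to some ordering of $Q$ as $1,2,\ldots,n$), where $1\le k<n$. Then $k=n-1$ and $(Q,\cdot,e)$ is induced by a cyclic group, i.e. the group $(Q,\diamond)$ with $x\diamond y=(e\cdot x)\cdot(e\cdot y)$ is cyclic.
   Context: A double Ward quasigroup $(Q,\cdot,e)$ is a quasigroup (a magma in which $ax=b$, $ya=b$ have unique solutions) with an element $e$ such that $(ee\cdot xz)(ey\cdot z)=xy$ for all $x,y,z$; the operation $x\diamond y=(ex)(ey)$ makes $Q$ a group with identity $e$, and $xy=x^{-1}\diamond y^{-1}$. With $Q=\{1,\ldots,n\}$ ordered naturally and $[i]_n$ denoting $i$ modulo $n$ (with $0$ identified with $n$), a magma $(Q,\cdot)$ is $k$-translatable ($1\le k<n$) if $i\cdot j=[i+1]_n\cdot[j+k]_n$ for all $i,j\in Q$; equivalently each row of the multiplication table is obtained from the previous one by moving its last $k$ entries to the front. *)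

From mathcomp Require Import all_boot.
Set Implicit Arguments. Unset Strict Implicit. Unset Printing Implicit Defensive.

Definition quasigroup (T : Type) (mul : T -> T -> T) : Prop :=
  forall a b : T, (exists! x, mul a x = b) /\ (exists! y, mul y a = b).

Definition double_ward (T : Type) (mul : T -> T -> T) (e : T) : Prop :=
  forall x y z : T, mul (mul (mul e e) (mul x z)) (mul (mul e y) z) = mul x y.

(* k-translatability w.r.t. an ordering [ord : T -> 'I_n] of T.
   Positions are 0,...,n-1 (position p corresponds to the paper's p+1);
   i.j = [i+1]_n . [j+k]_n. *)
Definition k_translatable (T : Type) (n : nat) (ord : T -> 'I_n)
    (mul : T -> T -> T) (k : nat) : Prop :=
  forall x y x' y' : T,
    val (ord x') = (val (ord x) + 1) %% n ->
    val (ord y') = (val (ord y) + k) %% n ->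
    mul x y = mul x' y'.

Definition diamond (T : Type) (mul : T -> T -> T) (e : T) (x y : T) : T :=
  mul (mul e x) (mul e y).

Definition diamond_cyclic (T : Type) (mul : T -> T -> T) (e : T) : Prop :=
  exists g : T, forall x : T, exists m : nat, x = iter m (diamond mul e g) e.

From mathcomp Require Import all_boot all_algebra.
From mathcomp Require Import ring.
Set Implicit Arguments. Unset Strict Implicit. Unset Printing Implicit Defensive.
Import GRing.Theory.
Local Open Scope ring_scope.

(* Transport the operation to Z_n along the ordering.  Translatability says
   that i.j only depends on j - k i, say i.j = h (j - k i) with h injective.
   Right cancellation makes multiplication by k injective, hence onto, and the
   double Ward identity then forces h (v + k x) = h v - k x, i.e. h is
   v |-> b - v.  Substituting back into the identity gives k = -1 in Z_n, so
   i.j = b - i - j, and x <> y = x + y + (2e - b) is the cyclic group Z_n. *)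

Lemma quasigroup_injl (T : Type) (mul : T -> T -> T) :
  quasigroup mul -> forall a, injective (mul a).
Proof.
move=> qg a x1 x2 eq_mul; have [[x [_ uniq_x]] _] := qg a (mul a x1).
by rewrite -(uniq_x x1) // (uniq_x x2).
Qed.

Lemma quasigroup_injr (T : Type) (mul : T -> T -> T) :
  quasigroup mul -> forall a, injective (mul^~ a).
Proof.
move=> qg a x1 x2 eq_mul; have [_ [x [_ uniq_x]]] := qg a (mul x1 a).
by rewrite -(uniq_x x1) // (uniq_x x2).
Qed.

Lemma k_translatable_Zp (T : Type) (n k : nat) (ord : T -> 'I_n.+2)
    (elt : 'I_n.+2 -> T) (mul : T -> T -> T) :
  cancel elt ord -> k_translatable ord mul k ->
  forall i j, mul (elt i) (elt j) = mul (elt (i + 1)) (elt (j + k%:R)).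
Proof.
move=> eltK tr i j; apply: tr; rewrite !eltK /= ?modnDmr //.
by rewrite (val_Zp_nat (p := n.+2)) // modnDmr.
Qed.

Lemma Zp_nat_eqN1 (n k : nat) : (k < n.+2)%N -> (k%:R : 'I_n.+2) = -1 -> k = n.+1.
Proof.
move=> k_lt /(congr1 (fun x => x + 1)); rewrite natr1 addNr.
move/(congr1 (@nat_of_ord _)); rewrite (val_Zp_nat (p := n.+2)) //= => /eqP.
by rewrite -/(dvdn _ _) => /(dvdn_leq (ltn0Sn k)) k_ge; apply/anti_leq/andP.
Qed.

Lemma diamond_cyclic_shift (T : Type) (n : nat) (ord : T -> 'I_n.+2)
    (elt : 'I_n.+2 -> T) (mul : T -> T -> T) (e g : T) :
  cancel ord elt -> (forall y, ord (diamond mul e g y) = ord y + 1) ->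
  diamond_cyclic mul e.
Proof.
move=> ordK diamond_succ; exists g => x.
have ord_iter m : ord (iter m (diamond mul e g) e) = ord e + m%:R.
  by elim: m => [|m IHm] /=; rewrite ?addr0 // diamond_succ IHm -natr1 addrA.
exists (val (ord x - ord e)).
by rewrite -[LHS]ordK -[RHS]ordK ord_iter natr_Zp addrC subrK.
Qed.

Section TranslatableWardZp.

Variables (n : nat) (r c : 'I_n.+2) (op : 'I_n.+2 -> 'I_n.+2 -> 'I_n.+2).

Hypothesis op_shift : forall i j, op i j = op (i + 1) (j + r).
Hypothesis opI : forall a, injective (op a).
Hypothesis opIr : forall a, injective (op^~ a).
Hypothesis op_ward :
  forall x y z, op (op (op c c) (op x z)) (op (op c y) z) = op x y.

Let h t := op 0 t.

Lemma op_shiftn m i j : op i j = op (i + m%:R) (j + m%:R * r).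
Proof.
elim: m i j => [|m IHm] i j; first by rewrite mul0r !addr0.
by rewrite IHm op_shift -natr1 mulrDl mul1r !addrA.
Qed.

Lemma op_diff i j : op i j = h (j - r * i).
Proof.
rewrite (op_shiftn (val (- i))) natr_Zp /h.
by congr (op _ _); ring.
Qed.

Lemma h_ward x y z :
  h (z - r * h (y - r * c)) - r * h (h (z - r * x) - r * h (c - r * c)) = y - r * x.
Proof. by have := op_ward x y z; rewrite !op_diff => /(@opI 0). Qed.

Lemma mulr_r_onto v : exists x, v = r * x.
Proof.
have r_inj : injective ( *%R r).
  by move=> i j r_ij; apply: (@opIr 0); rewrite !op_diff r_ij.
by have /codomP[x ->] := injF_onto r_inj v; exists x.
Qed.

(* Compare the identity at (x, 0, z + r x) with the one at (0, 0, z), where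
   z := v + r h (- r c) absorbs the constant term. *)
Lemma h_shift v x : h (v + r * x) = h v - r * x.
Proof.
set g := h (0 - r * c).
have ward_x := h_ward x 0 (v + r * g + r * x).
have ward_0 := h_ward 0 0 (v + r * g).
rewrite -/g (_ : v + r * g + r * x - r * g = v + r * x) in ward_x; last by ring.
rewrite (_ : v + r * g + r * x - r * x = v + r * g) in ward_x; last by ring.
rewrite -/g (_ : v + r * g - r * g = v) in ward_0; last by ring.
rewrite (_ : v + r * g - r * 0 = v + r * g) in ward_0; last by ring.
move/eqP: ward_x; rewrite subr_eq => /eqP ->.
by move/eqP: ward_0; rewrite subr_eq => /eqP ->; ring.
Qed.

Lemma h_affine v : h v = h 0 - v.
Proof. by have [x ->] := mulr_r_onto v; rewrite -[r * x]add0r h_shift add0r. Qed.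

(* At x = y = 0 the left side of the identity is affine in z with slope
   -1 - r, while the right side does not depend on z. *)
Lemma r_eqN1 : r = -1.
Proof.
have [b hb] : exists b, forall v, h v = b - v by exists (h 0); apply: h_affine.
pose L z := b - (z - r * (b - (0 - r * c)))
          - r * (b - ((b - (z - r * 0)) - r * (b - (c - r * c)))).
have L_const z : L z = 0 - r * 0 by rewrite /L -!hb; apply: h_ward.
have : L 1 - L 0 = -1 - r by rewrite /L; ring.
by rewrite !L_const subrr => /eqP; rewrite eq_sym subr_eq0 => /eqP <-.
Qed.

Lemma op_affine i j : op i j = op 0 0 - i - j.
Proof. by rewrite op_diff h_affine r_eqN1 /h; ring. Qed.

End TranslatableWardZp.

Theorem theorem4p14 (T : finType) (mul : T -> T -> T) (e : T)
    (n k : nat) (ord : T -> 'I_n) :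
  bijective ord ->
  quasigroup mul ->
  double_ward mul e ->
  (1 <= k < n)%N ->
  k_translatable ord mul k ->
  k = n.-1 /\ diamond_cyclic mul e.
Proof.
case: n ord => [|[|n]] ord [elt ordK eltK] qg ward /andP[k_gt0 k_lt] tr.
- by [].
- by case: k {tr} k_gt0 k_lt.
pose op i j := ord (mul (elt i) (elt j)).
have op_shift i j : op i j = op (i + 1) (j + k%:R).
  by rewrite /op (k_translatable_Zp eltK tr).
have opI a : injective (op a).
  by move=> i j /(can_inj ordK) /(quasigroup_injl qg) /(can_inj eltK).
have opIr a : injective (op^~ a).
  by move=> i j /(can_inj ordK) /(quasigroup_injr qg) /(can_inj eltK).
have op_ward x y z :
    op (op (op (ord e) (ord e)) (op x z)) (op (op (ord e) y) z) = op x y.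
  by rewrite /op !ordK ward.
have ord_mul x y : ord (mul x y) = op 0 0 - ord x - ord y.
  by rewrite -(op_affine op_shift opI opIr op_ward) /op !ordK.
split; first exact: Zp_nat_eqN1 k_lt (r_eqN1 op_shift opI opIr op_ward).
apply: (diamond_cyclic_shift (g := elt (1 + op 0 0 - ord e - ord e)) ordK) => y.
by rewrite /diamond !ord_mul eltK; ring.
Qed.
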